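(* Let $S$ be a compact convex subset of $\mathbb{R}^n_+$ with $0\in S$ and let $\Gamma\neq\mathbb{R}^n$ be a closed convex cone in $\mathbb{R}^n$ containing at least one point of $]0,\infty[^n$. Then $$\widehat S_\Gamma=(S-\Gamma^\circ)\cap\mathbb{R}^n_+,$$ and $\varphi_{\widehat S_\Gamma}(\xi)=\varphi_S(\xi)$ for every $\xi\in\Gamma$. Moreover, if for every $\xi\in\mathbb{R}^n$ and every extreme point $x$ of $\widehat S_\Gamma$ there exists $\eta\in\Gamma$ such that $\langle x,\xi\rangle\le\langle x,\eta\rangle$ and $\varphi_S(\eta)=\varphi_S(\xi)$, then $S=\widehat S_\Gamma$.
   Context: $\mathbb{R}_+=[0,\infty)$. For a set $T\subset\mathbb{R}^n$, $\varphi_T(\xi)=\sup_{t\in T}\langle t,\xi\rangle$. A cone is a set $\Gamma$ with $t\xi\in\Gamma$ for $\xi\in\Gamma$, $t\ge0$. The dual cone is $\Gamma^\circ=\{x\in\mathbb{R}^n\,;\,\langle x,\xi\rangle\ge0\ \forall\xi\in\Gamma\}$. The $\Gamma$-hull of $S\subset\mathbb{R}^n_+$ is $\widehat S_\Gamma=\{x\in\mathbb{R}^n_+\,;\,\langle x,\xi\rangle\le\varphi_S(\xi)\ \forall\xi\in\Gamma\}$, and $S-\Gamma^\circ=\{s-t\,;\,s\in S,t\in\Gamma^\circ\}$. *)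

From HB Require Import structures.
From mathcomp Require Import all_boot all_order all_algebra.
From mathcomp Require Import all_classical all_reals all_analysis.
Set Implicit Arguments. Unset Strict Implicit. Unset Printing Implicit Defensive.
Import Order.TTheory GRing.Theory Num.Theory.
Import numFieldNormedType.Exports.
Local Open Scope classical_set_scope.
Local Open Scope ring_scope.

Definition dotp (R : realType) (n : nat) (x y : 'rV[R]_n) : R :=
  \sum_(i < n) x ord0 i * y ord0 i.

Definition nonneg_orthant (R : realType) (n : nat) : set 'rV[R]_n :=
  [set x | forall i, 0 <= x ord0 i].

Definition pos_orthant (R : realType) (n : nat) : set 'rV[R]_n :=
  [set x | forall i, 0 < x ord0 i].

(* supporting function phi_T(xi) = sup_{t in T} <t, xi>, valued in the
   extended reals (so that it is meaningful for any T) *)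
Definition supp_fun (R : realType) (n : nat) (T : set 'rV[R]_n) (xi : 'rV[R]_n)
  : \bar R := ereal_sup [set (dotp t xi)%:E | t in T].

Definition is_cone (R : realType) (n : nat) (G : set 'rV[R]_n) :=
  forall xi t, G xi -> 0 <= t -> G (t *: xi).

Definition dual_cone (R : realType) (n : nat) (G : set 'rV[R]_n) : set 'rV[R]_n :=
  [set x | forall xi, G xi -> 0 <= dotp x xi].

Definition Ghull (R : realType) (n : nat) (G S : set 'rV[R]_n) : set 'rV[R]_n :=
  [set x | @nonneg_orthant R n x /\
           forall xi, G xi -> ((dotp x xi)%:E <= supp_fun S xi)%E].

Definition set_diff_mink (R : realType) (n : nat) (S T : set 'rV[R]_n) : set 'rV[R]_n :=
  [set s - t | s in S & t in T].

Definition extreme_point (R : realType) (n : nat) (A : set 'rV[R]_n) (x : 'rV[R]_n) :=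
  A x /\ forall y z (t : R), A y -> A z -> 0 < t < 1 ->
    x = t *: y + (1 - t) *: z -> y = z.

(* For x in the Gamma-hull, let p be a point of the convex set S - Gamma° nearest
   to x (one exists since S is compact and Gamma° is closed). The residual
   xi = x - p lies in Gamma°° = Gamma, and the variational inequality of the
   projection gives |xi|^2 <= <x, xi> - phi_S(xi) <= 0, so x = p. The reverse
   inclusion and the equality of support functions are immediate.
   For the last claim, let x be in the hull but not in S and xi = x - p for the
   point p of S nearest to x, so that phi_S(xi) <= <x, xi> - |xi|^2. The hull is
   compact (Gamma contains a positive vector), so the strictly convex function
   y |-> <y, xi> + e |y|^2 attains its maximum on it at an extreme point x'. For
   the eta given by the hypothesis, <x', xi> <= <x', eta> <= phi_S(eta) = phi_S(xi),
   which contradicts the maximality of x' once e is small. *)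

From HB Require Import structures.
From mathcomp Require Import all_boot all_order all_algebra.
From mathcomp Require Import all_classical all_reals all_analysis.
From mathcomp Require Import ring lra.
Set Implicit Arguments. Unset Strict Implicit. Unset Printing Implicit Defensive.
Import Order.TTheory GRing.Theory Num.Theory.
Import numFieldNormedType.Exports.
Local Open Scope classical_set_scope.
Local Open Scope ring_scope.

Section DotProduct.
Context {R : realType} {n : nat}.
Local Notation V := 'rV[R]_n.
Implicit Types (x y z : V) (a : R).

Lemma dotpC x y : dotp x y = dotp y x.
Proof. by apply: eq_bigr => i _; rewrite mulrC. Qed.

Lemma dotpDl x y z : dotp (x + y) z = dotp x z + dotp y z.
Proof. by rewrite /dotp -big_split; apply: eq_bigr => i _; rewrite mxE mulrDl. Qed.

Lemma dotpZl a x z : dotp (a *: x) z = a * dotp x z.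
Proof. by rewrite /dotp mulr_sumr; apply: eq_bigr => i _; rewrite mxE mulrA. Qed.

Lemma dotpNl x z : dotp (- x) z = - dotp x z.
Proof. by rewrite -scaleN1r dotpZl mulN1r. Qed.

Lemma dotpBl x y z : dotp (x - y) z = dotp x z - dotp y z.
Proof. by rewrite dotpDl dotpNl. Qed.

Lemma dotp0l z : dotp 0 z = 0.
Proof. by rewrite -(scale0r 0) dotpZl mul0r. Qed.

Lemma dotpDr x y z : dotp z (x + y) = dotp z x + dotp z y.
Proof. by rewrite dotpC dotpDl !(dotpC z). Qed.

Lemma dotpZr a x z : dotp z (a *: x) = a * dotp z x.
Proof. by rewrite dotpC dotpZl dotpC. Qed.

Lemma dotpNr x z : dotp z (- x) = - dotp z x.
Proof. by rewrite dotpC dotpNl dotpC. Qed.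

Lemma dotpBr x y z : dotp z (x - y) = dotp z x - dotp z y.
Proof. by rewrite dotpDr dotpNr. Qed.

Lemma dotp0r z : dotp z 0 = 0.
Proof. by rewrite dotpC dotp0l. Qed.

Lemma coordM_le_dotp x y i : (forall j, 0 <= x ord0 j * y ord0 j) ->
  x ord0 i * y ord0 i <= dotp x y.
Proof. by move=> xy0; rewrite /dotp (bigD1 i) //= lerDl sumr_ge0. Qed.

Lemma sqr_coord_le_dotpp x i : x ord0 i ^+ 2 <= dotp x x.
Proof. by rewrite expr2 coordM_le_dotp // => j; rewrite -expr2 sqr_ge0. Qed.

Lemma dotpp_ge0 x : 0 <= dotp x x.
Proof. by apply: sumr_ge0 => i _; rewrite -expr2 sqr_ge0. Qed.

Lemma dotpp_eq0 x : (dotp x x == 0) = (x == 0).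
Proof.
apply/eqP/eqP => [x0|->]; last exact: dotp0l.
apply/rowP => i; rewrite mxE; apply/eqP; rewrite -sqrf_eq0 eq_le sqr_ge0 andbT.
by rewrite -x0 sqr_coord_le_dotpp.
Qed.

Lemma dotpp_gt0 x : (0 < dotp x x) = (x != 0).
Proof. by rewrite lt_neqAle dotpp_ge0 andbT eq_sym dotpp_eq0. Qed.

Lemma dotpp_le0 x : (dotp x x <= 0) = (x == 0).
Proof. by rewrite leNgt dotpp_gt0 negbK. Qed.

Lemma dotpp_BZ x y a :
  dotp (x - a *: y) (x - a *: y) = dotp x x - 2 * a * dotp x y + a ^+ 2 * dotp y y.
Proof. by rewrite !(dotpBl, dotpBr, dotpZl, dotpZr) (dotpC y x); ring. Qed.

Lemma dotpp_conv x y a :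
  dotp (a *: x + (1 - a) *: y) (a *: x + (1 - a) *: y) =
  a * dotp x x + (1 - a) * dotp y y - a * (1 - a) * dotp (x - y) (x - y).
Proof.
by rewrite !(dotpDl, dotpDr, dotpNl, dotpNr, dotpZl, dotpZr) !(dotpC y x); ring.
Qed.

Lemma normr_rV_le x M : 0 <= M -> (forall i, `|x ord0 i| <= M) -> `|x| <= M.
Proof.
move=> M0 xM; rewrite [leLHS]/Num.norm /= mx_normrE.
by apply: bigmax_le => // -[i j] _ /=; rewrite (ord1 i).
Qed.

Lemma normr_le_dotpp x : `|x| <= 1 + dotp x x.
Proof.
apply: normr_rV_le => [|i]; first by rewrite addr_ge0 ?dotpp_ge0.
apply: le_trans (lerD (lexx 1) (sqr_coord_le_dotpp x i)).
rewrite -real_normK ?num_real //; have := normr_ge0 (x ord0 i); nra.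
Qed.

Lemma normr_le_sqdist x y : `|y| <= `|x| + (1 + dotp (x - y) (x - y)).
Proof.
rewrite -{1}(subKr x y); apply: le_trans (ler_normB _ _) _.
by rewrite lerD2l normr_le_dotpp.
Qed.

Lemma continuous_dotp (T : topologicalType) (f g : T -> V) :
  continuous f -> continuous g -> continuous (fun t => dotp (f t) (g t)).
Proof.
move=> fc gc; apply: continuous_big => [|i _]; first exact: add_continuous.
move=> t; apply: continuousM.
  exact: (continuous_comp (fc t) (@coord_continuous R 1 n ord0 i _)).
exact: (continuous_comp (gc t) (@coord_continuous R 1 n ord0 i _)).
Qed.

Lemma continuous_dotpl z : continuous (fun x => dotp x z).
Proof.
apply: (@continuous_dotp _ id (fun=> z)); first by move=> ?; exact: cvg_id.
exact: cst_continuous.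
Qed.

Lemma continuous_dotpp : continuous (fun x => dotp x x).
Proof. by apply: continuous_dotp => x; exact: cvg_id. Qed.

Lemma continuous_sqdist x : continuous (fun y => dotp (x - y) (x - y)).
Proof.
have xBc : continuous (fun y : V => x - y).
  by move=> y; apply: continuousB; [exact: cst_continuous | exact: cvg_id].
exact: continuous_dotp.
Qed.

End DotProduct.

Arguments continuous_dotpl {R n} z.
Arguments continuous_sqdist {R n} x.

Section LevelSets.
Context {R : realType} {T : topologicalType}.

Lemma closed_sublevel (f : T -> R) c : continuous f -> closed [set t | f t <= c].
Proof.
move=> fc; have := @preimage_closed _ R f [set r | r <= c].
by apply=> [t _|]; [exact: fc | exact: closed_le].
Qed.

Lemma closed_superlevel (f : T -> R) c : continuous f -> closed [set t | c <= f t].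
Proof.
move=> fc; have := @preimage_closed _ R f [set r | c <= r].
by apply=> [t _|]; [exact: fc | exact: closed_ge].
Qed.

Lemma closed_esublevel (f : T -> R) (e : \bar R) :
  continuous f -> closed [set t | ((f t)%:E <= e)%E].
Proof.
move=> fc; case: e => [r||].
- under eq_set do rewrite lee_fin; exact: closed_sublevel.
- rewrite (_ : [set t | _] = setT); first exact: closedT.
  by apply/seteqP; split => t //= _; rewrite leey.
- rewrite (_ : [set t | _] = set0); first exact: closed0.
  by apply/seteqP; split => t //=; rewrite leeNy_eq.
Qed.

Lemma compact_continuous_ub (f : T -> R) (A : set T) : compact A -> continuous f ->
  exists M, forall t, A t -> f t <= M.
Proof.
move=> cA fc; have [[a Aa]|A0] := pselect (A !=set0).
  have [t _ tmax] := compact_EVT_max (ex_intro _ a Aa) cA (continuous_subspaceT fc).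
  by exists (f t) => u Au; apply: tmax; rewrite inE.
by exists 0 => t At; case: A0; exists t.
Qed.

End LevelSets.

Lemma bounded_normr_le (K : realFieldType) (V : normedModType K) (A : set V) (M : K) :
  (forall v, A v -> `|v| <= M) -> bounded_set A.
Proof.
move=> AM; exists M; split=> [|M' MM' v /AM vM]; first exact: num_real.
exact: le_trans vM (ltW MM').
Qed.

Section Convexity.
Context {R : realType} {n : nat}.
Local Notation V := 'rV[R]_n.
Local Notation convex A := (convex_set (A : set (convex_lmodType V))).
Implicit Types (A G : set V) (x y : V).

Lemma convexP A : convex A <->
  (forall x y t, A x -> A y -> 0 <= t <= 1 -> A (t *: x + (1 - t) *: y)).
Proof.
split => [cA x y t Ax Ay /andP[t0 t1]|cA x y l].
  by have := cA x y (Itv01 t0 t1); rewrite !inE; apply.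
by rewrite !inE => Ax Ay; apply: cA; rewrite ?ge0 ?le1.
Qed.

Lemma convex_mink_diff A G : convex A -> convex G -> convex (set_diff_mink A G).
Proof.
move=> /convexP cA /convexP cG.
apply/convexP => _ _ t [a Aa [g Gg <-]] [b Ab [h Gh <-]] t01.
exists (t *: a + (1 - t) *: b); first exact: cA.
exists (t *: g + (1 - t) *: h); first exact: cG.
by rewrite !scalerBr opprD addrACA.
Qed.

Lemma cone0 G x : is_cone G -> G x -> G 0.
Proof. by move=> coG /(coG _ 0 ^~ (lexx 0)); rewrite scale0r. Qed.

Lemma cone_addr G x y : convex G -> is_cone G -> G x -> G y -> G (x + y).
Proof.
move=> /convexP cG coG Gx Gy.
have /(coG _ 2) : G (2^-1 *: x + (1 - 2^-1) *: y) by apply: cG => //; lra.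
have -> : 2 *: (2^-1 *: x + (1 - 2^-1) *: y) = x + y.
  by apply/rowP => i; rewrite !mxE; field.
by apply; lra.
Qed.

Lemma convex_dual_cone G : convex (dual_cone G).
Proof.
apply/convexP => x y t Gx Gy /andP[t0 t1] z Gz.
by rewrite dotpDl !dotpZl addr_ge0 // mulr_ge0 ?Gx ?Gy ?subr_ge0.
Qed.

Lemma closed_dual_cone G : closed (dual_cone G).
Proof.
rewrite (_ : dual_cone G = \bigcap_(z in G) [set y | 0 <= dotp y z]).
  by apply: closed_bigI => z _; apply/closed_superlevel/continuous_dotpl.
by apply/seteqP; split => y yG z Gz; exact: yG.
Qed.

End Convexity.

Section NearestPoint.
Context {R : realType} {n : nat}.
Local Notation V := 'rV[R]_n.
Local Notation convex A := (convex_set (A : set (convex_lmodType V))).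
Implicit Types (C : set V) (x p : V).

Definition nearest C x p :=
  C p /\ forall c, C c -> dotp (x - p) (x - p) <= dotp (x - c) (x - c).

Lemma nearest_dotp_le0 C x p : convex C -> nearest C x p ->
  forall c, C c -> dotp (x - p) (c - p) <= 0.
Proof.
move=> /convexP cC [Cp pmin] c Cc.
set a := dotp (x - p) (c - p); set b := dotp (c - p) (c - p).
have b0 : 0 <= b := dotpp_ge0 _.
have le_tb t : 0 < t <= 1 -> 2 * a <= t * b.
  move=> /andP[t0 t1]; have t01 : 0 <= t <= 1 by rewrite ltW.
  have := pmin _ (cC c p t Cc Cp t01).
  have -> : x - (t *: c + (1 - t) *: p) = (x - p) - t *: (c - p).
    by apply/rowP => i; rewrite !mxE; ring.
  rewrite dotpp_BZ -/a -/b => h.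
  by rewrite -(ler_pM2l t0); nra.
rewrite leNgt; apply/negP => a0.
have ab0 : 0 < a + b by lra.
have := le_tb (a / (a + b)); rewrite divr_gt0 // ler_pdivrMr // mul1r lerDl b0.
by rewrite mulrAC ler_pdivlMr //; nra.
Qed.

Lemma compact_nearest C x : compact C -> C !=set0 -> exists p, nearest C x p.
Proof.
move=> cC C0.
have [p] := compact_EVT_min C0 cC (continuous_subspaceT (continuous_sqdist x)).
by rewrite inE => Cp pmin; exists p; split => // c Cc; apply: pmin; rewrite inE.
Qed.

Lemma compact_sublevel_nearest C x c0 : C c0 ->
  compact (C `&` [set c | dotp (x - c) (x - c) <= dotp (x - c0) (x - c0)]) ->
  exists p, nearest C x p.
Proof.
move=> Cc0 cK; have [|p [[Cp _] pmin]] := compact_nearest x cK.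
  by exists c0; split => /=.
exists p; split => // c Cc.
have [cle|/ltW c0c] := leP (dotp (x - c) (x - c)) (dotp (x - c0) (x - c0)).
  exact: pmin.
by apply: le_trans _ c0c; apply: pmin; split => /=.
Qed.

Lemma closed_nearest C x : closed C -> C !=set0 -> exists p, nearest C x p.
Proof.
move=> clC [c0 Cc0]; apply: (compact_sublevel_nearest Cc0).
apply: bounded_closed_compact.
  apply: (@bounded_normr_le _ _ _ (`|x| + (1 + dotp (x - c0) (x - c0)))).
  move=> c [_ /= cle]; apply: le_trans (normr_le_sqdist x c) _.
  by rewrite lerD2l lerD2l.
by apply: closedI clC _; apply: closed_sublevel; exact: continuous_sqdist.
Qed.

Lemma mink_diff_nearest (S T : set V) x : compact S -> closed T ->
  S !=set0 -> T !=set0 -> exists p, nearest (set_diff_mink S T) x p.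
Proof.
move=> cS clT [s0 Ss0] [t0 Tt0].
pose d2 c := dotp (x - c) (x - c); pose r := d2 (s0 - t0).
have [M SM] := compact_continuous_ub cS (@norm_continuous _ V).
pose B := [set t : V | `|t| <= M + (`|x| + (1 + r))].
pose K := (S `*` B) `&` [set st | T st.2 /\ d2 (st.1 - st.2) <= r].
have cK : compact K.
  apply: compact_closedI; first apply: compact_setX cS _.
    apply: bounded_closed_compact.
      exact: (@bounded_normr_le _ _ B _ (fun v => id)).
    by apply: closed_sublevel; exact: norm_continuous.
  apply: closedI.
    by have := @preimage_closed _ _ snd T; apply=> [st _|//]; exact: cvg_snd.
  apply: closed_sublevel => st.
  by apply: continuous_comp; [exact: sub_continuous | exact: continuous_sqdist].
apply: (@compact_sublevel_nearest _ _ (s0 - t0)); first by exists s0 => //; exists t0.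
rewrite (_ : _ `&` _ = (fun st => st.1 - st.2) @` K); last first.
  apply/seteqP; split=> [c [[s Ss [t Tt <-]] cle]|_ [[s t] [[Ss _] [Tt cle]] <-]].
    exists (s, t) => //; split; split => //=.
    rewrite -{1}(subKr s t); apply: le_trans (ler_normB _ _) _.
    apply: lerD; first exact: SM.
    by apply: le_trans (normr_le_sqdist x _) _; rewrite !lerD2l.
  by split => //; exists s => //; exists t.
apply: continuous_compact cK; apply: continuous_subspaceT => st.
exact: sub_continuous.
Qed.

Lemma bidual_cone_sub (G : set V) : closed G -> convex G -> is_cone G -> G !=set0 ->
  dual_cone (dual_cone G) `<=` G.
Proof.
move=> clG cvG coG G0 x xG.
have [p pG] := closed_nearest x clG G0; have Gp := pG.1.
have le0 := nearest_dotp_le0 cvG pG; set y := x - p in le0.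
have Gy : dual_cone G (- y).
  move=> g Gg; rewrite dotpNl oppr_ge0.
  by have := le0 _ (cone_addr cvG coG Gp Gg); rewrite [p + g]addrC addrK.
have xy : dotp x y <= 0 by have := xG _ Gy; rewrite dotpNr oppr_ge0.
have py : 0 <= dotp p y.
  by have := le0 _ (cone0 coG Gp); rewrite sub0r dotpNr oppr_le0 dotpC.
have : dotp y y <= 0 by rewrite {1}/y dotpBl; lra.
rewrite dotpp_le0 subr_eq0 => /eqP ->.
exact: Gp.
Qed.

End NearestPoint.

Section GammaHull.
Context {R : realType} {n : nat}.
Local Notation V := 'rV[R]_n.
Local Notation convex A := (convex_set (A : set (convex_lmodType V))).
Implicit Types (S G T : set V) (x xi : V).

Lemma supp_fun_ub T xi t : T t -> ((dotp t xi)%:E <= supp_fun T xi)%E.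
Proof. by move=> Tt; apply: ereal_sup_ubound; exists t. Qed.

Lemma supp_fun_le T xi c : (forall t, T t -> dotp t xi <= c) ->
  (supp_fun T xi <= c%:E)%E.
Proof. by move=> Tc; apply: ge_ereal_sup => _ [t Tt <-]; rewrite lee_fin Tc. Qed.

Lemma supp_fun_nearest_le S x p : convex S -> nearest S x p ->
  (supp_fun S (x - p) <= (dotp x (x - p) - dotp (x - p) (x - p))%:E)%E.
Proof.
move=> cvS pS; set xi := x - p.
have -> : dotp xi xi = dotp x xi - dotp p xi by rewrite {1}/xi dotpBl.
apply: supp_fun_le => s /(nearest_dotp_le0 cvS pS).
by rewrite -/xi dotpBr !(dotpC xi); lra.
Qed.

Lemma sub_Ghull S G : S `<=` @nonneg_orthant R n -> S `<=` Ghull G S.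
Proof. by move=> Sp s Ss; split=> [|xi _]; [exact: Sp | exact: supp_fun_ub]. Qed.

Lemma supp_fun_Ghull S G xi : S `<=` @nonneg_orthant R n -> G xi ->
  supp_fun (Ghull G S) xi = supp_fun S xi.
Proof.
move=> Sp Gxi; apply/eqP; rewrite eq_le; apply/andP; split.
  by apply: ge_ereal_sup => _ [y [_ Hy] <-]; exact: Hy.
by apply: ereal_sup_le => _ [s Ss <-]; exists s => //; exact: sub_Ghull.
Qed.

Lemma mink_diff_dual_sub_Ghull S G :
  set_diff_mink S (dual_cone G) `&` @nonneg_orthant R n `<=` Ghull G S.
Proof.
move=> _ [[s Ss [t Gt <-]] stp]; split => // xi Gxi.
apply: le_trans (supp_fun_ub xi Ss); rewrite lee_fin dotpBl.
by rewrite lerBlDr lerDl Gt.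
Qed.

Lemma Ghull_sub_mink_diff_dual S G : compact S -> convex S -> S !=set0 ->
  closed G -> convex G -> is_cone G -> G !=set0 ->
  Ghull G S `<=` set_diff_mink S (dual_cone G) `&` @nonneg_orthant R n.
Proof.
move=> cS cvS S0 clG cvG coG G0 x [xp xH]; split => //.
have dG0 : dual_cone G 0 by move=> xi _; rewrite dotp0l.
have [p pD] := mink_diff_nearest x cS (closed_dual_cone (G := G)) S0 (ex_intro _ 0 dG0).
have le0 := nearest_dotp_le0 (convex_mink_diff cvS (convex_dual_cone (G := G))) pD.
have [[s Ss [t Gt ps]] _] := pD.
set y := x - p in le0.
have le_st s' t' : S s' -> dual_cone G t' -> dotp y (s' - s) <= dotp y (t' - t).
  move=> Ss' Gt'.
  have : set_diff_mink S (dual_cone G) (s' - t') by exists s' => //; exists t'.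
  move/le0; rewrite -ps (_ : s' - t' - (s - t) = s' - s - (t' - t)).
    by rewrite dotpBr subr_le0.
  by apply/rowP => i; rewrite !mxE; ring.
have Gy : G y.
  apply: bidual_cone_sub => // u Gu.
  have Gtu : dual_cone G (t + u) by move=> xi Gxi; rewrite dotpDl addr_ge0 ?Gt ?Gu.
  by have := le_st s _ Ss Gtu; rewrite subrr dotp0r [t + u]addrC addrK.
have ys s' : S s' -> dotp s' y <= dotp s y.
  by move=> /le_st /(_ Gt); rewrite subrr dotp0r dotpBr subr_le0 !(dotpC y).
have yt : dotp t y <= 0.
  by have := le_st s 0 Ss dG0; rewrite subrr dotp0r sub0r dotpNr oppr_ge0 dotpC.
have xy : dotp x y <= dotp s y.
  by rewrite -lee_fin; apply: le_trans (xH y Gy) (supp_fun_le ys).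
have : dotp y y <= 0 by rewrite {1}/y -ps !dotpBl; lra.
rewrite dotpp_le0 subr_eq0 => /eqP ->.
by rewrite -ps; exists s => //; exists t.
Qed.

Lemma closed_Ghull S G : closed (Ghull G S).
Proof.
rewrite (_ : Ghull G S = \bigcap_(i in [set: 'I_n]) [set y : V | 0 <= y ord0 i] `&`
    \bigcap_(xi in G) [set y | ((dotp y xi)%:E <= supp_fun S xi)%E]).
  apply: closedI.
    by apply: closed_bigI => i _; apply: closed_superlevel; exact: coord_continuous.
  by apply: closed_bigI => xi _; apply: closed_esublevel; exact: continuous_dotpl.
apply/seteqP; split => [y [yp yH]|y [yp yH]].
  by split => [i _|xi Gxi]; [exact: yp | exact: yH].
by split => [i|xi Gxi]; [exact: yp | exact: yH].
Qed.

Lemma compact_Ghull S G : compact S -> G `&` @pos_orthant R n !=set0 ->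
  compact (Ghull G S).
Proof.
move=> cS [xi0 [Gxi0 xi0_gt0]].
have [c0 Sc0] := compact_continuous_ub cS (continuous_dotpl xi0).
pose M := \big[Num.max/0]_j (c0 / xi0 ord0 j).
apply: bounded_closed_compact; last exact: closed_Ghull.
apply: (@bounded_normr_le _ _ _ M) => y [yp yH].
apply: normr_rV_le => [|i]; first exact: bigmax_ge_id.
rewrite ger0_norm //; apply: le_trans (le_bigmax _ _ i); rewrite ler_pdivlMr //.
have yxi0 : y ord0 i * xi0 ord0 i <= dotp y xi0.
  by apply: coordM_le_dotp => j; exact: mulr_ge0 (yp j) (ltW (xi0_gt0 j)).
apply: le_trans yxi0 _; rewrite -lee_fin; apply: le_trans (yH _ Gxi0) _.
exact: supp_fun_le.
Qed.

Lemma argmax_extreme_point (A : set V) xi (e : R) x : 0 < e -> A x ->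
  (forall y, A y -> dotp y xi + e * dotp y y <= dotp x xi + e * dotp x x) ->
  extreme_point A x.
Proof.
move=> e0 Ax xmax; split => // y z t Ay Az /andP[t0 t1] xE.
have := xmax _ Ay; have := xmax _ Az.
rewrite xE dotpp_conv [dotp (_ + _) xi]dotpDl !dotpZl => gz gy.
have : e * (t * (1 - t)) * dotp (y - z) (y - z) <= 0.
  have t1' : 0 < 1 - t by rewrite subr_gt0.
  nra.
rewrite pmulr_rle0; last by rewrite !mulr_gt0 // subr_gt0.
by rewrite dotpp_le0 subr_eq0 => /eqP.
Qed.

Lemma Ghull_sub_of_extreme S G : compact S -> convex S -> S !=set0 ->
  G `&` @pos_orthant R n !=set0 ->
  (forall xi x, extreme_point (Ghull G S) x ->
    exists2 eta, G eta & dotp x xi <= dotp x eta /\ supp_fun S eta = supp_fun S xi) ->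
  Ghull G S `<=` S.
Proof.
move=> cS cvS S0 GP ext x Hx.
have [p pS] := compact_nearest x cS S0.
have [->|xNp] := eqVneq x p; first exact: pS.1.
set xi := x - p; set d := dotp xi xi.
have d_gt0 : 0 < d by rewrite dotpp_gt0 subr_eq0.
have Sxi := supp_fun_nearest_le cvS pS; rewrite -/xi -/d in Sxi.
have cH := compact_Ghull cS GP.
have [M HM] := compact_continuous_ub cH continuous_dotpp.
have M_ge0 : 0 <= M := le_trans (dotpp_ge0 x) (HM x Hx).
pose e := d / (2 * (M + 1)).
have e_gt0 : 0 < e by rewrite divr_gt0 // mulr_gt0 //; lra.
have eM : e * M < d.
  have : e * (2 * (M + 1)) = d by rewrite /e mulfVK //; lra.
  nra.
pose g y := dotp y xi + e * dotp y y.
have gc : continuous g.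
  move=> y; apply: (@continuousD _ _ _ (fun y : V => dotp y xi) (fun y => e * dotp y y)).
    exact: continuous_dotpl.
  apply: (@continuousM _ _ (fun=> e)); first exact: cst_continuous.
  exact: continuous_dotpp.
have [x' /[!inE] Hx' x'max] :=
  compact_EVT_max (ex_intro _ x Hx) cH (continuous_subspaceT gc).
have [eta Geta [x'eta Seta]] :=
  ext xi x' (argmax_extreme_point e_gt0 Hx' (fun y Hy => x'max y (mem_set Hy))).
have x'eta_le : dotp x' eta <= dotp x xi - d.
  by rewrite -lee_fin; apply: le_trans (Hx'.2 _ Geta) _; rewrite Seta.
have := x'max x (mem_set Hx); rewrite /g.
have : e * dotp x' x' <= e * M by rewrite ler_pM2l // HM.
have : 0 <= e * dotp x x by rewrite mulr_ge0 ?dotpp_ge0 ?ltW.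
lra.
Qed.

End GammaHull.

Theorem proposition5p6 (R : realType) (n : nat) (S G : set 'rV[R]_n) :
  compact S -> convex_set (S : set (convex_lmodType 'rV[R]_n)) ->
  S `<=` @nonneg_orthant R n -> S 0 ->
  closed G -> convex_set (G : set (convex_lmodType 'rV[R]_n)) -> is_cone G ->
  G != setT -> G `&` @pos_orthant R n !=set0 ->
  [/\ Ghull G S = set_diff_mink S (dual_cone G) `&` @nonneg_orthant R n,
      (forall xi, G xi -> supp_fun (Ghull G S) xi = supp_fun S xi) &
      ((forall xi x, extreme_point (Ghull G S) x ->
          exists2 eta, G eta &
            dotp x xi <= dotp x eta /\ supp_fun S eta = supp_fun S xi) ->
       S = Ghull G S)].
Proof.
move=> cS cvS Sp S0 clG cvG coG _ GP.
have S_ne : S !=set0 by exists 0.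
have G_ne : G !=set0 by have [xi [Gxi _]] := GP; exists xi.
split.
- apply/seteqP; split; last exact: mink_diff_dual_sub_Ghull.
  exact: Ghull_sub_mink_diff_dual.
- by move=> xi; exact: supp_fun_Ghull.
- move=> ext; apply/seteqP; split; first exact: sub_Ghull.
  exact: Ghull_sub_of_extreme ext.
Qed.
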